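(* Let $H$ be a divisible group all of whose elements are almost right Engel. Then for any $g,x\in H$ there is a positive integer $n(x,g)$ such that $[[g,{}_nx],g]=1$ for all $n\ge n(x,g)$.
   Context: Commutators: $a^b=b^{-1}ab$, $[a,b]=a^{-1}b^{-1}ab$, and $[a,{}_nb]=[\dots[[a,b],b],\dots,b]$ with $b$ repeated $n$ times. An element $g$ of a group $G$ is almost right Engel if there is a finite set $\mathscr R\subseteq G$ such that for every $x\in G$ there is a positive integer $r(x,g)$ with $[g,{}_nx]\in\mathscr R$ for all $n\ge r(x,g)$. A group $H$ is divisible if for every $h\in H$ and every positive integer $k$ there is $x\in H$ with $x^k=h$. *)

From Stdlib Require Import List Arith.

Record Group := {
  carrier :> Type;
  gmul : carrier -> carrier -> carrier;
  ginv : carrier -> carrier;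
  gone : carrier;
  gmul_assoc : forall a b c, gmul a (gmul b c) = gmul (gmul a b) c;
  gmul_1l : forall a, gmul gone a = a;
  gmul_1r : forall a, gmul a gone = a;
  gmul_Vl : forall a, gmul (ginv a) a = gone;
  gmul_Vr : forall a, gmul a (ginv a) = gone
}.

Section Ops.
Variable G : Group.

Definition comm (a b : G) : G :=
  gmul G (gmul G (gmul G (ginv G a) (ginv G b)) a) b.

Fixpoint ecomm (a b : G) (n : nat) : G :=
  match n with
  | 0 => a
  | S k => comm (ecomm a b k) b
  end.

Fixpoint gpow (x : G) (k : nat) : G :=
  match k with
  | 0 => gone G
  | S j => gmul G x (gpow x j)
  end.

Definition almost_right_Engel (g : G) : Prop :=
  exists R : list G, forall x : G, exists r : nat, 0 < r /\
    forall n, r <= n -> In (ecomm g x n) R.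

Definition divisible : Prop :=
  forall (h : G) (k : nat), 0 < k -> exists x : G, gpow x k = h.
End Ops.

From Stdlib Require Import List Arith Lia Classical.

(* Write g = h^(L!) with L the size of the finite set R attached to g, and
   c = [g,_n x].  Conjugation by h^j fixes g, so c^(h^j) = [g,_n x^(h^j)],
   which lies in R for n large, uniformly in j <= L.  By pigeonhole two of
   c, c^h, ..., c^(h^L) coincide, so some power h^d with 1 <= d <= L
   centralises c; as d divides L!, so does g, i.e. [c,g] = 1. *)

Section GroupFacts.
Variable G : Group.

Local Infix "·" := (gmul G) (at level 40, left associativity).
Local Notation "a ⁻¹" := (ginv G a) (at level 2, format "a ⁻¹").
Local Notation e := (gone G).

Lemma mul_left_cancel (a b c : G) : a · b = a · c -> b = c.
Proof.
  intros E.
  rewrite <- (gmul_1l G b), <- (gmul_1l G c), <- (gmul_Vl G a),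
    <- !gmul_assoc, E.
  reflexivity.
Qed.

Lemma inv_unique (a b : G) : a · b = e -> b = a⁻¹.
Proof. intros E. apply (mul_left_cancel a). now rewrite E, gmul_Vr. Qed.

Lemma inv_one : e⁻¹ = e.
Proof. symmetry. apply inv_unique, gmul_1l. Qed.

Lemma inv_mul (a b : G) : (a · b)⁻¹ = b⁻¹ · a⁻¹.
Proof.
  symmetry. apply inv_unique.
  now rewrite !gmul_assoc, <- (gmul_assoc G a b), gmul_Vr, gmul_1r, gmul_Vr.
Qed.

Definition gconj (a y : G) : G := y⁻¹ · a · y.

Lemma gconj_mul (a b y : G) : gconj (a · b) y = gconj a y · gconj b y.
Proof.
  unfold gconj. rewrite !gmul_assoc.
  now rewrite <- (gmul_assoc G _ y y⁻¹), gmul_Vr, gmul_1r.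
Qed.

Lemma gconj_one_l (y : G) : gconj e y = e.
Proof. unfold gconj. now rewrite gmul_1r, gmul_Vl. Qed.

Lemma gconj_one_r (a : G) : gconj a e = a.
Proof. unfold gconj. now rewrite inv_one, gmul_1l, gmul_1r. Qed.

Lemma gconj_inv (a y : G) : gconj a⁻¹ y = (gconj a y)⁻¹.
Proof. apply inv_unique. now rewrite <- gconj_mul, gmul_Vr, gconj_one_l. Qed.

Lemma gconj_comm (a b y : G) : gconj (comm G a b) y = comm G (gconj a y) (gconj b y).
Proof. unfold comm. now rewrite !gconj_mul, !gconj_inv. Qed.

Lemma gconj_ecomm (a b y : G) (n : nat) :
  gconj (ecomm G a b n) y = ecomm G (gconj a y) (gconj b y) n.
Proof.
  induction n as [|n IH]; [reflexivity|].
  cbn [ecomm]. now rewrite gconj_comm, IH.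
Qed.

Lemma gconj_gconj_mul (a p q : G) : gconj (gconj a p) q = gconj a (p · q).
Proof. unfold gconj. now rewrite inv_mul, !gmul_assoc. Qed.

Lemma gconj_inj (y a b : G) : gconj a y = gconj b y -> a = b.
Proof.
  intros E.
  rewrite <- (gconj_one_r a), <- (gconj_one_r b), <- (gmul_Vr G y),
    <- !gconj_gconj_mul, E.
  reflexivity.
Qed.

Lemma gconj_commuting (g h : G) : g · h = h · g -> gconj g h = g.
Proof.
  intros E. unfold gconj.
  now rewrite <- gmul_assoc, E, gmul_assoc, gmul_Vl, gmul_1l.
Qed.

Lemma comm_eq1_of_gconj_fixed (c g : G) : gconj c g = c -> comm G c g = e.
Proof.
  intros E.
  replace (comm G c g) with (c⁻¹ · gconj c g)
    by (unfold comm, gconj; now rewrite !gmul_assoc).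
  now rewrite E, gmul_Vl.
Qed.

Lemma gpow_add (h : G) (a b : nat) : gpow G h (a + b) = gpow G h a · gpow G h b.
Proof.
  induction a as [|a IH]; cbn [gpow Nat.add].
  - now rewrite gmul_1l.
  - now rewrite IH, gmul_assoc.
Qed.

Lemma gpow_commute (h : G) (a b : nat) :
  gpow G h a · gpow G h b = gpow G h b · gpow G h a.
Proof. now rewrite <- !gpow_add, Nat.add_comm. Qed.

Lemma gconj_gpow_mul_fixed (c h : G) (d m : nat) :
  gconj c (gpow G h d) = c -> gconj c (gpow G h (d * m)) = c.
Proof.
  intros Hd. induction m as [|m IH].
  - now rewrite Nat.mul_0_r, gconj_one_r.
  - now rewrite Nat.mul_succ_r, gpow_add, <- gconj_gconj_mul, IH.
Qed.

Lemma gconj_gpow_period (c h : G) (i j : nat) :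
  i <= j -> gconj c (gpow G h i) = gconj c (gpow G h j) ->
  gconj c (gpow G h (j - i)) = c.
Proof.
  intros Hij E. apply (gconj_inj (gpow G h i)).
  now rewrite gconj_gconj_mul, <- gpow_add, Nat.sub_add.
Qed.

End GroupFacts.

Lemma Nat_divide_fact (d L : nat) : 1 <= d <= L -> Nat.divide d (fact L).
Proof.
  induction L as [|L IH]; intros Hd; [lia|].
  cbn [fact]. destruct (Nat.eq_dec d (S L)) as [->|Hne].
  - apply Nat.divide_factor_l.
  - apply Nat.divide_mul_r, IH. lia.
Qed.

Lemma pigeonhole_list {A : Type} (R : list A) (f : nat -> A) :
  (forall j, j <= length R -> In (f j) R) ->
  exists i j, i < j <= length R /\ f i = f j.
Proof.
  intros Hf. apply NNPP. intros Hno.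
  assert (Hnodup : NoDup (map f (seq 0 (S (length R))))).
  { apply NoDup_map_NoDup_ForallPairs; [|apply seq_NoDup].
    intros a b Ha Hb Eab. apply in_seq in Ha, Hb.
    destruct (lt_eq_lt_dec a b) as [[Hlt|Heq]|Hlt]; [|assumption|];
      exfalso; apply Hno; [exists a, b | exists b, a]; split; auto; lia. }
  assert (Hincl : incl (map f (seq 0 (S (length R)))) R).
  { intros y Hy. apply in_map_iff in Hy as [j [<- Hj]].
    apply in_seq in Hj. apply Hf. lia. }
  apply NoDup_incl_length in Hincl; [|assumption].
  rewrite length_map, length_seq in Hincl. lia.
Qed.

Lemma ecomm_in_list_uniform (G : Group) (g : G) (R : list G) (y : nat -> G) :
  (forall x : G, exists r : nat, 0 < r /\ forall n, r <= n -> In (ecomm G g x n) R) ->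
  forall L, exists B, forall j n, j <= L -> B <= n -> In (ecomm G g (y j) n) R.
Proof.
  intros HR L. induction L as [|L [B HB]].
  - destruct (HR (y 0)) as [r [_ Hr]]. exists r.
    intros j n Hj Hn. replace j with 0 by lia. auto.
  - destruct (HR (y (S L))) as [r [_ Hr]]. exists (Nat.max B r).
    intros j n Hj Hn.
    destruct (Nat.eq_dec j (S L)) as [->|Hne]; [apply Hr | apply HB]; lia.
Qed.

Lemma gconj_gpow_fact_fixed (G : Group) (R : list G) (c h : G) :
  (forall j, j <= length R -> In (gconj G c (gpow G h j)) R) ->
  gconj G c (gpow G h (fact (length R))) = c.
Proof.
  intros Horbit.
  destruct (pigeonhole_list R _ Horbit) as [i [j [Hij E]]].
  destruct (Nat_divide_fact (j - i) (length R)) as [m Hm]; [lia|].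
  rewrite Hm, Nat.mul_comm.
  apply gconj_gpow_mul_fixed, (gconj_gpow_period G c h i j); [lia | exact E].
Qed.

Theorem lemma5p1 (H : Group) (Hdiv : divisible H)
  (Heng : forall g : H, almost_right_Engel H g) :
  forall g x : H, exists N : nat, 0 < N /\
    forall n, N <= n -> comm H (ecomm H g x n) g = gone H.
Proof.
  intros g x. destruct (Heng g) as [R HR].
  destruct (Hdiv g (fact (length R)) (lt_O_fact _)) as [h Hh].
  destruct (ecomm_in_list_uniform H g R (fun j => gconj H x (gpow H h j)) HR
              (length R)) as [B HB].
  exists (S B). split; [lia|]. intros n Hn.
  assert (Hg : forall j, gconj H g (gpow H h j) = g).
  { intros j. apply gconj_commuting. rewrite <- Hh. apply gpow_commute. }
  apply comm_eq1_of_gconj_fixed. rewrite <- Hh at 2.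
  apply gconj_gpow_fact_fixed. intros j Hj.
  rewrite gconj_ecomm, Hg. apply HB; lia.
Qed.
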